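(* Let $A$ be a commutative semiring and $\rho$ a maximal congruence on $A$. If $\rho=\rho_+$, then $\rho$ is a prime congruence.
   Context: Semirings are commutative with $0$ and $1\neq0$, $0a=0$; congruences are equivalence relations compatible with $+,\cdot$. A congruence $\rho\neq A\times A$ is maximal if any congruence $\tau$ with $\rho\subseteq\tau$ is $\rho$ or $A\times A$. Twisted product $(a,b)\ast(c,d)=(ac+bd,ad+bc)$; a congruence $\rho\ne A\times A$ is prime if $(a,b)\ast(c,d)\in\rho$ implies $(a,b)\in\rho$ or $(c,d)\in\rho$. $\rho_+=\{(a,b):(a+c,b+c)\in\rho$ for some $c\in A\}$. *)

(* Commutative semirings with 0, 1 <> 0, 0a = 0:
   mathcomp's comNzSemiRingType. Congruences as Prop-valued relations. *)
From mathcomp Require Import all_boot all_algebra.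
Set Implicit Arguments. Unset Strict Implicit. Unset Printing Implicit Defensive.
Import GRing.Theory.
Local Open Scope ring_scope.

Section SemiringCongruences.
Variable A : comNzSemiRingType.

Definition srel := A -> A -> Prop.

Definition is_congruence (r : srel) : Prop :=
  [/\ (forall a, r a a),
      (forall a b, r a b -> r b a),
      (forall a b c, r a b -> r b c -> r a c),
      (forall a b c d, r a b -> r c d -> r (a + c) (b + d)) &
      (forall a b c d, r a b -> r c d -> r (a * c) (b * d))].

Definition full_rel : srel := fun _ _ => True.

Definition proper_rel (r : srel) : Prop := exists a b, ~ r a b.

Definition maximal_congruence (r : srel) : Prop :=
  [/\ is_congruence r, proper_rel r &
      forall t : srel, is_congruence t -> (forall a b, r a b -> t a b) ->
        (forall a b, t a b <-> r a b) \/ (forall a b, t a b)].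

Definition twisted (p q : A * A) : A * A :=
  (p.1 * q.1 + p.2 * q.2, p.1 * q.2 + p.2 * q.1).

Definition prime_congruence (r : srel) : Prop :=
  [/\ is_congruence r, proper_rel r &
      forall p q : A * A, r (twisted p q).1 (twisted p q).2 ->
        r p.1 p.2 \/ r q.1 q.2].

Definition rel_plus (r : srel) : srel :=
  fun a b => exists c, r (a + c) (b + c).

End SemiringCongruences.

(** Given [p = (a, b)], the relation [x ~ y] iff [(x, y) * p] lies in [rho]
    is a congruence containing [rho]; transitivity is where the additive
    cancellativity [rho = rho_+] is needed.  By maximality it is either [rho]
    itself, so that [(x, y) * p] in [rho] forces [(x, y)] in [rho], or it is
    total, and then [(1, 0) * p = p] lies in [rho]. *)
From mathcomp Require Import all_boot all_algebra.
From mathcomp Require Import ring.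
Set Implicit Arguments.
Import GRing.Theory.
Local Open Scope ring_scope.

Section ColonCongruence.
Variable A : comNzSemiRingType.
Implicit Types (r : srel A) (p q : A * A) (x y z w : A).

Lemma rel_eq_args r x y x' y' : x = x' -> y = y' -> r x y -> r x' y'.
Proof. by move=> <- <-. Qed.

Lemma twistedC p q : twisted p q = twisted q p.
Proof. by rewrite /twisted; congr pair; ring. Qed.

Lemma twisted1l p : twisted (1, 0) p = p.
Proof. by case: p => a b; rewrite /twisted /= !mul1r !mul0r !addr0. Qed.

Lemma is_congruence_mull r :
  (forall x, r x x) -> (forall x y, r x y -> r y x) ->
  (forall x y z, r x y -> r y z -> r x z) ->
  (forall x y z w, r x y -> r z w -> r (x + z) (y + w)) ->
  (forall w x y, r x y -> r (w * x) (w * y)) ->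
  is_congruence r.
Proof.
move=> refl sym trans add mull; split=> // x y z w rxy rzw.
apply: (trans _ (y * z)); last exact: mull.
by rewrite mulrC [y * z]mulrC; apply: mull.
Qed.

Definition colon_rel r p : srel A :=
  fun x y => r (twisted (x, y) p).1 (twisted (x, y) p).2.

Variable rho : srel A.
Hypothesis rho_congr : is_congruence rho.
Hypothesis rho_cancel : forall x y z, rho (x + z) (y + z) -> rho x y.

Lemma colon_rel_congruence p : is_congruence (colon_rel rho p).
Proof.
case: rho_congr => refl sym trans add mul; case: p => a b.
rewrite /colon_rel /twisted /=.
apply: is_congruence_mull => [x | x y rxy | x y z rxy ryz | x y z w rxy rzw | w x y rxy].
- by rewrite addrC.
- by apply: sym; apply: rel_eq_args rxy; ring.
- apply: (rho_cancel _ _ (y * a + y * b)).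
  by apply: rel_eq_args (add _ _ _ _ rxy ryz); ring.
- by apply: rel_eq_args (add _ _ _ _ rxy rzw); ring.
- by apply: rel_eq_args (mul _ _ _ _ (refl w) rxy); ring.
Qed.

Lemma sub_colon_rel p x y : rho x y -> colon_rel rho p x y.
Proof.
case: rho_congr => refl sym _ add mul; case: p => a b rxy.
rewrite /colon_rel /twisted /=.
have := add _ _ _ _ (mul _ _ _ _ rxy (refl a)) (mul _ _ _ _ (sym _ _ rxy) (refl b)).
by apply: rel_eq_args; ring.
Qed.

End ColonCongruence.

Theorem proposition2p23 (A : comNzSemiRingType) (rho : A -> A -> Prop) :
  maximal_congruence rho ->
  (forall a b, rho a b <-> rel_plus rho a b) ->
  prime_congruence rho.
Proof.
move=> [rho_congr rho_proper rho_max] rho_plus.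
have rho_cancel x y z : rho (x + z) (y + z) -> rho x y.
  by move=> h; apply/rho_plus; exists z.
split=> // p [c d] rpq.
have colon_cd : colon_rel rho p c d by rewrite /colon_rel -twistedC.
case: (rho_max _ (colon_rel_congruence rho_congr rho_cancel p)
                 (sub_colon_rel rho_congr p)) => [colon_eq | colon_full].
  by right; apply/colon_eq.
by left; have := colon_full 1 0; rewrite /colon_rel twisted1l.
Qed.
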